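(* Let $n\ge 3$ be odd and let $m \ge \frac{5n-1}{2}$. Then the permutations $(3,n)(2n-1,2n+1)$ and $(2,n+1)(2n,2n+2)$ in $S_m$ are each a product of $n$-crossing permutations over $S_m$.
   Context: For integers $2\le n\le m$ and $1 \le j \le m-n+1$, the $n$-crossing permutation $\pi_j\in S_m$ is $\pi_j=(j,\,j+n-1)(j+1,\,j+n-2)\cdots$, i.e. the involution sending $i \mapsto 2j+n-1-i$ for $j\le i\le j+n-1$ and fixing all other elements of $\{1,\dots,m\}$ (for odd $n$ the middle element $j+\frac{n-1}{2}$ is fixed). The $n$-crossing permutations over $S_m$ are $\pi_1,\dots,\pi_{m-n+1}$. *)

(* Points {1,...,m} are represented by 'I_m via i <-> (val i).+1. *)
From mathcomp Require Import all_boot all_fingroup.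
Unset Printing Implicit Defensive.

(* The n-crossing involution pi_j on 1-indexed points:
   i |-> 2j+n-1-i for j <= i <= j+n-1, identity otherwise. *)
Definition cross (n j x : nat) : nat :=
  if (j <= x) && (x <= j + n - 1) then 2 * j + n - 1 - x else x.

Definition is_crossing (m n : nat) (s : 'S_m) : Prop :=
  exists j : nat, 1 <= j /\ j <= m - n + 1 /\
    forall i : 'I_m, (s i).+1 = cross n j i.+1.

Definition prod_of_crossings (m n : nat) (g : 'S_m) : Prop :=
  exists l : seq 'S_m, (forall s, s \in l -> is_crossing m n s) /\
    g = (\prod_(s <- l) s)%g.

Definition swapn (a b x : nat) : nat :=
  if x == a then b else if x == b then a else x.

(* For crossings of length n, pi_j pi_(j+1) pi_j is
   a transposition (j+n-2, j+n) times a crossing of length n-2, and symmetrically for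
   pi_(j+1) pi_j pi_(j+1); a crossing of length n followed by the length n-2 crossing nested
   inside it is a single transposition; conjugating a transposition by an involution moves its
   two points; and crossings and transpositions with disjoint supports commute.  Composing these
   identities along two explicit words of eight crossings yields the two double transpositions
   (for n = 3 the first one is itself a crossing). *)

From mathcomp Require Import all_boot all_fingroup zify.

(* Phrased without truncated subtraction, which keeps lia fast on nested crossings. *)
Variant cross_spec n j x : nat -> Type :=
  | CrossIn y of j <= x < j + n & x + y + 1 = 2 * j + n : cross_spec n j x y
  | CrossOut of (x < j) || (j + n <= x) : cross_spec n j x x.

Lemma crossP n j x : cross_spec n j x (cross n j x).
Proof.
rewrite /cross; case: ifP => h; last by apply: CrossOut; lia.
have [n0|n_gt0] := posnP n; last by apply: CrossIn; lia.
have -> : 2 * j + n - 1 - x = x by lia.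
by apply: CrossOut; lia.
Qed.

Variant swapn_spec a b x : nat -> Type :=
  | SwapnFst of x = a : swapn_spec a b x b
  | SwapnSnd of x <> a & x = b : swapn_spec a b x a
  | SwapnOut of x <> a & x <> b : swapn_spec a b x x.

Lemma swapnP a b x : swapn_spec a b x (swapn a b x).
Proof.
rewrite /swapn; case: eqP => [|xa]; first exact: SwapnFst.
by case: eqP => [|xb]; [exact: SwapnSnd | exact: SwapnOut].
Qed.

Ltac has_no_piece x :=
  lazymatch x with
  | context [cross _ _ _] => fail
  | context [swapn _ _ _] => fail
  | _ => idtac
  end.

(* Innermost first: [case:] abstracts the goal only, so the hypotheses of a case split must
   not mention a piece that is split later. *)
Ltac case_innermost_piece :=
  match goal with
  | |- context [cross ?n ?j ?x] => has_no_piece x; case: (crossP n j x) => [? ? ?|?]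
  | |- context [swapn ?a ?b ?x] => has_no_piece x; case: (swapnP a b x) => [?|? ?|? ?]
  end.

Ltac piecewise_lia := repeat case_innermost_piece; lia.

Lemma cross_involutive n j : involutive (cross n j).
Proof. by move=> x; piecewise_lia. Qed.

Lemma cross_conj_succ n j x :
  cross n.+2 j (cross n.+2 j.+1 (cross n.+2 j x)) = swapn (j + n) (j + n.+2) (cross n j x).
Proof. by piecewise_lia. Qed.

Lemma cross_succ_conj n j x :
  cross n.+2 j.+1 (cross n.+2 j (cross n.+2 j.+1 x)) = swapn j j.+2 (cross n j.+3 x).
Proof. by piecewise_lia. Qed.

Lemma cross_nested n j x : cross n j.+1 (cross n.+2 j x) = swapn j (j + n.+1) x.
Proof. by piecewise_lia. Qed.

Lemma cross_commute n p j k x : j + n <= k ->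
  cross n j (cross p k x) = cross p k (cross n j x).
Proof. by move=> jnk; piecewise_lia. Qed.

Lemma swapn_cross_commute a b n j x : (a < j) || (j + n <= a) -> (b < j) || (j + n <= b) ->
  swapn a b (cross n j x) = cross n j (swapn a b x).
Proof. by move=> ha hb; piecewise_lia. Qed.

Lemma swapnC a b x : swapn a b x = swapn b a x.
Proof. by piecewise_lia. Qed.

Lemma swapn_commute a b c d x : a != c -> a != d -> b != c -> b != d ->
  swapn a b (swapn c d x) = swapn c d (swapn a b x).
Proof. by move=> ac ad bc bd; piecewise_lia. Qed.

Lemma swapn_conj {s : nat -> nat} : involutive s ->
  forall a b x, s (swapn a b (s x)) = swapn (s a) (s b) x.
Proof.
move=> sK a b x; rewrite /swapn -!(inv_eq sK).
by case: (s x == a); last case: (s x == b).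
Qed.

Definition cross_word n (w : seq nat) x := foldl (fun y j => cross n j y) x w.

(* pi_n pi_(n-1) pi_n conjugated by pi_1 is (2, n+1) times the reversal R of [n+2, 2n-1],
   and pi_(n+2) pi_(n+3) pi_(n+2) is R times (2n, 2n+2). *)
Lemma cross_word_swap2 n x : 2 <= n ->
  cross_word n [:: 1; n; n.-1; n; 1; n.+2; n.+3; n.+2] x
  = swapn 2 (n + 1) (swapn (2 * n) (2 * n + 2) x).
Proof.
case: n => [|[|k]] // _; rewrite /cross_word /=.
have left_half y : cross k.+2 1 (cross k.+2 k.+2 (cross k.+2 k.+1 (cross k.+2 k.+2 (cross k.+2 1 y))))
    = swapn 2 k.+3 (cross k k.+4 y).
  rewrite cross_succ_conj -(cross_commute k.+2 k 1 k.+4) //.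
  by rewrite (swapn_conj (cross_involutive _ _)); congr swapn; piecewise_lia.
rewrite left_half cross_conj_succ -swapn_cross_commute ?cross_involutive; [|lia..].
by rewrite swapn_commute; [congr (swapn _ _ (swapn _ _ _)); lia | lia..].
Qed.

(* pi_4 pi_5 pi_4 is (n+2, n+4) times the reversal of [4, n+1]; conjugating by pi_(n+2)
   turns the transposition into (2n+1, 2n-1), preceding it by pi_3 cancels the reversal down
   to (3, n+2), and the outer conjugation by pi_(t+2) sends n+2 to n. *)
Lemma cross_word_swap3 n t x : n = 2 * t + 1 -> 2 <= t ->
  cross_word n [:: t.+2; 3; n.+2; 4; 5; 4; n.+2; t.+2] x
  = swapn 3 n (swapn (2 * n - 1) (2 * n + 1) x).
Proof.
move=> nt t2; have [k nk] : exists k, n = k.+2 by exists n.-2; lia.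
rewrite {}nk /cross_word /= in nt *.
have inner y : cross k.+2 k.+4 (cross k.+2 4 (cross k.+2 5 (cross k.+2 4
    (cross k.+2 k.+4 (cross k.+2 3 y))))) = swapn (2 * k + 5) (2 * k + 3) (swapn 3 k.+4 y).
  rewrite cross_conj_succ (cross_commute k k.+2 4 k.+4) // cross_nested.
  by rewrite (swapn_conj (cross_involutive _ _)); congr swapn; piecewise_lia.
rewrite inner -swapn_cross_commute; [|lia..].
rewrite (swapn_conj (cross_involutive _ _)).
have -> : cross k.+2 t.+2 3 = 3 by piecewise_lia.
have -> : cross k.+2 t.+2 k.+4 = k.+2 by piecewise_lia.
rewrite swapnC swapn_commute; [|lia..].
by congr (swapn _ _ (swapn _ _ _)); lia.
Qed.

Lemma cross_word_swap3_base x :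
  cross_word 3 [:: 5] x = swapn 3 3 (swapn (2 * 3 - 1) (2 * 3 + 1) x).
Proof. by rewrite /cross_word /=; piecewise_lia. Qed.

Definition realizes {m} (g : 'S_m) (f : nat -> nat) := forall i : 'I_m, (g i).+1 = f i.+1.

Lemma realizes_inj m (g h : 'S_m) f : realizes g f -> realizes h f -> g = h.
Proof. by move=> gf hf; apply/permP => i; apply/val_inj/succn_inj; rewrite gf hf. Qed.

Lemma realizes_mul m (g h : 'S_m) f f' :
  realizes g f -> realizes h f' -> realizes (g * h)%g (f' \o f).
Proof. by move=> gf hf' i; rewrite permM hf' gf. Qed.

Lemma realizes_le m (g : 'S_m) f x : realizes g f -> 0 < x <= m -> f x <= m.
Proof.
move=> gf /andP[x_gt0 x_le]; have x_ord : x.-1 < m by lia.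
by rewrite -(prednK x_gt0) -(gf (Ordinal x_ord)) ltn_ord.
Qed.

Lemma crossing_realized m n j : 0 < j -> j + n <= m.+1 ->
  exists s : 'S_m, realizes s (cross n j).
Proof.
move=> j_gt0 jn_le.
have cross_ord (i : 'I_m) : (cross n j i.+1).-1 < m by have := ltn_ord i; piecewise_lia.
pose f i := Ordinal (cross_ord i).
have f_val i : (f i).+1 = cross n j i.+1 by rewrite /= prednK //; piecewise_lia.
have f_inj : injective f.
  move=> a b fab; apply/val_inj/succn_inj.
  by rewrite -[a.+1](cross_involutive n j) -[b.+1](cross_involutive n j) -!f_val fab.
by exists (perm f_inj) => i; rewrite permE f_val.
Qed.

Lemma prod_of_crossings_cross_word m n w (g : 'S_m) :
  all (fun j => (0 < j) && (j + n <= m.+1)) w -> realizes g (cross_word n w) ->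
  prod_of_crossings m n g.
Proof.
move=> w_ok gw.
suff [l l_cross l_w] : exists2 l : seq 'S_m,
    (forall s, s \in l -> is_crossing m n s) & realizes (\prod_(s <- l) s)%g (cross_word n w).
  by exists l; split; last exact: realizes_inj gw l_w.
elim: w w_ok {gw} => [_|j w IH /andP[/andP[j_gt0 jn_le] /IH[l l_cross l_w]]].
  by exists [::] => // i; rewrite big_nil perm1.
have [s sj] := crossing_realized _ _ _ j_gt0 jn_le.
exists (s :: l); last by rewrite big_cons; exact: realizes_mul sj l_w.
move=> r; rewrite inE => /predU1P[->|/l_cross //].
by exists j; split; [|split] => //; lia.
Qed.

Theorem lemma4p2 (n m : nat) :
  3 <= n -> odd n -> 5 * n - 1 <= 2 * m ->
  (forall g : 'S_m,
     (forall i : 'I_m, (g i).+1 = swapn 3 n (swapn (2 * n - 1) (2 * n + 1) i.+1)) ->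
     prod_of_crossings m n g) /\
  (forall g : 'S_m,
     (forall i : 'I_m, (g i).+1 = swapn 2 (n + 1) (swapn (2 * n) (2 * n + 2) i.+1)) ->
     prod_of_crossings m n g).
Proof.
move=> n_ge3 n_odd mn; split => g g_swap.
  have n_half : n = 2 * n./2 + 1 by have := odd_double_half n; rewrite n_odd; lia.
  have [n_eq3|half_ge2] : n = 3 \/ 2 <= n./2 by lia.
    apply: (prod_of_crossings_cross_word _ _ [:: 5]); first by rewrite /=; lia.
    by move=> i; rewrite g_swap n_eq3 cross_word_swap3_base.
  apply: (prod_of_crossings_cross_word _ _ [:: n./2.+2; 3; n.+2; 4; 5; 4; n.+2; n./2.+2]).
    by rewrite /=; lia.
  by move=> i; rewrite g_swap (cross_word_swap3 _ _ _ n_half half_ge2).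
pose f x := swapn 2 (n + 1) (swapn (2 * n) (2 * n + 2) x).
have two_n : 0 < 2 * n <= m by lia.
(* For n = 3, m = 7 the hypothesis on m is too weak; the room for pi_(n+3) comes from g. *)
have m_ge : 2 * n + 2 <= m by have := realizes_le _ g f _ g_swap two_n; rewrite /f; piecewise_lia.
apply: (prod_of_crossings_cross_word _ _ [:: 1; n; n.-1; n; 1; n.+2; n.+3; n.+2]).
  by rewrite /=; lia.
by move=> i; rewrite g_swap cross_word_swap2 //; lia.
Qed.
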